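(* Let $q$ be a prime power and $r,k\ge 2$ integers, $n=rk$. Let $g_{r,k}:\mathbb{F}_q^n\to\mathbb{F}_q$, $g_{r,k}(x_1,\dots,x_n)=\sum_{j=0}^{k-1}x_{jr+1}x_{jr+2}\cdots x_{jr+r}$. Then the linear code $$\mathcal{C}_{g_{r,k}}=\{(u\,g_{r,k}(x)+v\cdot x)_{x\in\mathbb{F}_q^n\setminus\{0\}}\ :\ u\in\mathbb{F}_q,\ v\in\mathbb{F}_q^n\}$$ satisfies Property (P).
   Context: Here $v\cdot x$ denotes the standard inner product $\sum_i v_ix_i$, and coordinates of codewords are indexed by the nonzero vectors $x\in\mathbb{F}_q^n$ in some fixed order. Property (P): every nonzero codeword $w=(w_1,\dots,w_N)$ satisfies $\{w_1,\dots,w_N\}=\mathbb{F}_q$, i.e. its coordinates take all $q$ values of $\mathbb{F}_q$. *)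

From HB Require Import structures.
From mathcomp Require Import all_boot all_order all_algebra all_field.
Set Implicit Arguments. Unset Strict Implicit. Unset Printing Implicit Defensive.
Import GRing.Theory.
Local Open Scope ring_scope.

Lemma blk_idx_proof (r k : nat) (j : 'I_k) (i : 'I_r) : (j * r + i < r * k)%N.
Proof.
case: j => j hj; case: i => i hi /=.
rewrite mulnC; apply: (@leq_trans (r * j + r)%N).
  by rewrite ltn_add2l.
by rewrite addnC -mulnS leq_mul2l hj orbT.
Qed.

Definition blk_idx (r k : nat) (j : 'I_k) (i : 'I_r) : 'I_(r * k) :=
  Ordinal (blk_idx_proof j i).

(* g_{r,k}(x) = sum_{j<k} prod_{i<r} x_{j r + i}  (0-based indices) *)
Definition g_rk (F : fieldType) (r k : nat) (x : 'rV[F]_(r * k)) : F :=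
  \sum_(j < k) \prod_(i < r) x 0 (blk_idx j i).

Definition dotv (F : fieldType) (n : nat) (v x : 'rV[F]_n) : F :=
  \sum_(i < n) v 0 i * x 0 i.

(* the coordinate of the codeword (u,v) at position x *)
Definition cw (F : fieldType) (r k : nat) (u : F) (v x : 'rV[F]_(r * k)) : F :=
  u * g_rk x + dotv v x.

From HB Require Import structures.
From mathcomp Require Import all_boot all_order all_algebra all_field.
Set Implicit Arguments. Unset Strict Implicit. Unset Printing Implicit Defensive.
Import GRing.Theory.
Local Open Scope ring_scope.

(* The value 0 is taken at a nonzero point supported on the first coordinates
   of two different blocks: there g vanishes (the second coordinate of every
   block is 0, as r >= 2) and v . x is a linear form in two unknowns, which has
   a nonzero root.  A nonzero value a is taken on a multiple of a unit vector
   if v != 0 (g vanishes there as well); if v = 0 then u != 0, and g takes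
   every value on the vectors whose first block is (t, 1, ..., 1) and whose
   other blocks are 0. *)

Lemma row_neq0 (F : fieldType) (n : nat) (x : 'rV[F]_n) (p : 'I_n) :
  x 0 p != 0 -> x != 0.
Proof. by apply: contraNneq => ->; rewrite mxE. Qed.

Lemma scale_delta_rowE (F : fieldType) (n : nat) (b : F) (p m : 'I_n) :
  (b *: 'e_p : 'rV[F]_n) 0 m = if m == p then b else 0.
Proof. by rewrite !mxE eqxx /= mulr_natr mulrb. Qed.

Section DotProduct.
Variables (F : fieldType) (n : nat).
Implicit Types (v x y : 'rV[F]_n) (b : F).

Lemma dot0v x : dotv 0 x = 0.
Proof. by rewrite /dotv big1 // => i _; rewrite mxE mul0r. Qed.

Lemma dotv0 v : dotv v 0 = 0.
Proof. by rewrite /dotv big1 // => i _; rewrite mxE mulr0. Qed.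

Lemma dotvD v x y : dotv v (x + y) = dotv v x + dotv v y.
Proof. by rewrite /dotv -big_split; apply: eq_bigr => i _; rewrite mxE mulrDr. Qed.

Lemma dotvZ v b x : dotv v (b *: x) = b * dotv v x.
Proof.
by rewrite /dotv mulr_sumr; apply: eq_bigr => i _; rewrite mxE mulrCA.
Qed.

Lemma dotv_delta v (p : 'I_n) : dotv v 'e_p = v 0 p.
Proof.
rewrite /dotv (bigD1 p) //= big1 => [|i /negbTE ip]; first by rewrite mxE !eqxx mulr1 addr0.
by rewrite mxE ip mulr0.
Qed.

End DotProduct.

Section CodewordValues.
Variables (F : fieldType) (r k : nat).
Hypotheses (r_gt1 : (1 < r)%N) (k_gt0 : (0 < k)%N).
Implicit Types (v x : 'rV[F]_(r * k)) (p : 'I_(r * k)) (u a b c t : F).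

Let i0 : 'I_r := Ordinal (ltnW r_gt1).
Let i1 : 'I_r := Ordinal r_gt1.
Let j0 : 'I_k := Ordinal k_gt0.
Let i1_eq_i0F : (i1 == i0) = false. Proof. by []. Qed.

Lemma blk_idx_eq (j j' : 'I_k) (i i' : 'I_r) :
  (blk_idx j i == blk_idx j' i') = (j == j') && (i == i').
Proof.
apply/idP/andP => [/eqP/(congr1 val) /= E | [/eqP-> /eqP->] //].
have r_gt0 : (0 < r)%N := ltnW r_gt1.
have := congr1 (divn^~ r) E; rewrite !divnMDl // !divn_small // !addn0 => ej.
have := congr1 (modn^~ r) E; rewrite !modnMDl !modn_small // => ei.
by split; apply/eqP/val_inj.
Qed.

Lemma blk_idx_ltr (j : 'I_k) (i : 'I_r) : (blk_idx j i < r)%N = (j == 0 :> nat).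
Proof.
case: j => [[|j] /= _]; first by rewrite ltn_ord.
by rewrite mulSn -addnA ltnNge leq_addr.
Qed.

Lemma g_rk_eq0 x : (forall j, exists i, x 0 (blk_idx j i) = 0) -> g_rk x = 0.
Proof.
move=> x_blk0; rewrite /g_rk big1 // => j _; have [i xi0] := x_blk0 j.
by rewrite (bigD1 i) //= xi0 mul0r.
Qed.

Lemma g_rk_delta b p : g_rk (b *: 'e_p) = 0.
Proof.
apply: g_rk_eq0 => j; have [<-|pj] := eqVneq (blk_idx j i0) p.
  by exists i1; rewrite scale_delta_rowE blk_idx_eq i1_eq_i0F andbF.
by exists i0; rewrite scale_delta_rowE (negbTE pj).
Qed.

(* Supported on the first column of blocks, hence zero on the second one. *)
Lemma g_rk_delta2 b c (j j' : 'I_k) :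
  g_rk (b *: 'e_(blk_idx j i0) + c *: 'e_(blk_idx j' i0)) = 0.
Proof.
apply: g_rk_eq0 => l; exists i1.
by rewrite mxE !scale_delta_rowE !blk_idx_eq i1_eq_i0F !andbF addr0.
Qed.

Definition head_block_row t : 'rV[F]_(r * k) :=
  \row_m if (m < r)%N then (if m == 0 :> nat then t else 1) else 0.

Lemma g_rk_head_block_row t : g_rk (head_block_row t) = t.
Proof.
rewrite /g_rk (bigD1 j0) //= [X in _ + X]big1 ?addr0 => [|j /eqP j_neq0].
  rewrite (bigD1 i0) //= big1 ?mulr1 => [|i /eqP i_neq0]; rewrite mxE blk_idx_ltr //=.
  by rewrite mul0n add0n ifF //; apply/eqP => i_eq0; apply: i_neq0; apply: val_inj.
rewrite (bigD1 i0) //= mxE blk_idx_ltr ifF ?mul0r //.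
by apply/eqP => j_eq0; apply: j_neq0; apply: val_inj.
Qed.

Lemma cw_at0 u v : cw u v 0 = 0.
Proof.
rewrite /cw dotv0 addr0 (_ : g_rk 0 = 0) ?mulr0 //.
by apply: g_rk_eq0 => j; exists i0; rewrite mxE.
Qed.

Lemma cw_delta u v b p : cw u v (b *: 'e_p) = v 0 p * b.
Proof. by rewrite /cw g_rk_delta dotvZ dotv_delta mulr0 add0r mulrC. Qed.

Lemma cw_root (k_gt1 : (1 < k)%N) u v : exists x, x != 0 /\ cw u v x = 0.
Proof.
pose p := blk_idx j0 i0; pose q := blk_idx (Ordinal k_gt1) i0.
have [vp0 | vp_neq0] := eqVneq (v 0 p) 0.
  exists (1 *: 'e_p); split; last by rewrite cw_delta vp0 mul0r.
  by apply: (row_neq0 (p := p)); rewrite scale_delta_rowE eqxx oner_eq0.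
exists (v 0 q *: 'e_p + (- v 0 p) *: 'e_q); split.
  apply: (row_neq0 (p := q)).
  by rewrite mxE !scale_delta_rowE blk_idx_eq !eqxx add0r oppr_eq0.
by rewrite /cw g_rk_delta2 dotvD !dotvZ !dotv_delta mulr0 add0r mulNr mulrC subrr.
Qed.

Lemma cw_surj_nonzero u v a :
  a != 0 -> (u != 0) || (v != 0) -> exists x, cw u v x = a.
Proof.
move=> a_neq0; have [-> /= | v_neq0 _] := eqVneq v 0.
  rewrite orbF => u_neq0; exists (head_block_row (a / u)).
  by rewrite /cw g_rk_head_block_row dot0v addr0 mulrC divfK.
have [p vp_neq0] : exists p, v 0 p != 0.
  apply/existsP; apply: contraNT v_neq0 => /existsPn v_eq0.
  by apply/eqP/rowP => p; rewrite mxE; apply/eqP/negPn.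
by exists ((a / v 0 p) *: 'e_p); rewrite cw_delta mulrC divfK.
Qed.

End CodewordValues.

Theorem mainTheorem8 (F : finFieldType) (r k : nat) :
  (2 <= r)%N -> (2 <= k)%N ->
  forall (u : F) (v : 'rV[F]_(r * k)),
    (exists x : 'rV[F]_(r * k), x != 0 /\ cw u v x != 0) ->
    forall a : F, exists x : 'rV[F]_(r * k), x != 0 /\ cw u v x = a.
Proof.
move=> r_gt1 k_gt1 u v [y [_ cwy_neq0]] a.
have k_gt0 : (0 < k)%N := ltnW k_gt1.
have [-> | a_neq0] := eqVneq a 0; first exact: cw_root.
have uv_neq0 : (u != 0) || (v != 0).
  apply: contraNT cwy_neq0; rewrite negb_or !negbK => /andP[/eqP-> /eqP->].
  by rewrite /cw mul0r add0r dot0v.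
have [x cwx] := cw_surj_nonzero r_gt1 k_gt0 a_neq0 uv_neq0.
exists x; split => //; apply: contraNneq a_neq0 => x0.
by rewrite -cwx x0 cw_at0.
Qed.
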